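(* Let $\mathscr T$ be a functor satisfying (T1)–(T4) and let $\mathfrak K=(K,\bigsqcup,\odot,{}^*,{\sim},e)$ be a $\mathscr T$-based orthomodular dynamic algebra. Then for each $k\in K$ there exists a unique subset $S\subseteq\mathscr T(K)$ with $k=\bigsqcup S$.
   Context: An involutive unital quantale is $(Q,\bigsqcup,\odot,{}^*,e)$: $Q$ a complete join-semilattice, $\odot$ associative and distributing over arbitrary joins in each argument, $e$ a unit, ${}^*$ with $x^{**}=x$, $(x\odot y)^*=y^*\odot x^*$, $(\bigsqcup x_i)^*=\bigsqcup x_i^*$. An involutive generalized dynamic algebra (IDA) is such a quantale with ${\sim}\colon K\to K$ satisfying, for all $x,y$ and families $(x_i)$: ${\sim}(x\odot{\sim}{\sim}y)={\sim}(x\odot y)$; ${\sim}(\bigsqcup{\sim}{\sim}x_i)={\sim}(\bigsqcup x_i)$; $({\sim}x)^*={\sim}x$; ${\sim}{\sim}({\sim}{\sim}x\odot y)={\sim}({\sim}x\sqcup{\sim}({\sim}x\sqcup y))$. Test set $\widetilde K=\{{\sim}k\}$; $\bigvee W={\sim}{\sim}\bigsqcup W$; $w^\perp={\sim}w$; $k\preceq l$ iff $\bigvee\{k,l\}=l$; $k\bullet v={\sim}{\sim}(k\odot v)$; $k\equiv l$ iff $k\bullet w=l\bullet w$ for all $w\in\widetilde K$. IDA morphisms preserve joins, $\odot$, ${}^*$, unit, ${\sim}$ (category $\mathbb{IDA}$); semi-Foulis means $(\widetilde K,\preceq,{}^\perp)$ is a complete orthomodular lattice. $\mathbb{IM}$: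 involutive monoids and their homomorphisms. For a complete orthomodular lattice $\mathcal M$: $\pi_m(x)=m\wedge(m^\perp\vee x)$; $\mathbf{Lin}(\mathcal M)$ is the set of maps $f$ admitting $f^*$ with $f(x)\le y^\perp\iff x\le f^*(y)^\perp$, an IDA under pointwise joins, composition, ${}^*$, $\mathrm{id}$ and ${\sim}f=\pi_{f(1)^\perp}$; for an involutive submonoid $L\supseteq\{\pi_m\}$, $\mathscr P(L)$ is the IDA of subsets of $L$ with union, setwise composition and involution, unit $\{\mathrm{id}\}$, ${\sim}A=\{\pi_{(\bigvee_{a\in A}a(1))^\perp}\}$. $\mathscr T\colon\mathbb{IDA}\to\mathbb{IM}$ satisfies: (T1) $\widetilde K\subseteq\mathscr T(K)\subseteq K$ and $\mathscr T(K)$ is an involutive submonoid of $(K,\odot,{}^*,e)$; (T2) for semi-Foulis $\mathfrak K$ with $s=t\iff s\equiv t$ on $\mathscr T(K)$, $k\mapsto k\bullet(-)$ is an isomorphism $\mathscr T(\mathfrak K)\to\mathscr T(\mathbf{Lin}(\widetilde{\mathfrak K}))$; (T3) $f\mapsto\{f\}$ is an isomorphism $\mathscr T(\mathbf{Lin}(\mathcal M))\to\mathscr T(\mathscr P(\mathscr T(\mathbf{Lin}(\mathcal M))))$; (T4) $\mathscr T(f)$ is the restriction of $f$. A $\mathscr T$-based orthomodular dynamic algebra is an IDA with: (TODA1) $(\widetilde K,\preceq,{}^\perp)$ a complete orthomodular lattice; (TODA2) every $A$ with $\mathscr T(K)\subseteq A\subseteq K$ closed under $\odot$, ${}^*$,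 arbitrary joins equals $K$; (TODA3) for $S,T\subseteq\mathscr T(K)$, $\bigsqcup S=\bigsqcup T$ iff $S=T$; (TODA4) for $s,t\in\mathscr T(K)$, $s=t$ iff $s\equiv t$. *)

Definition image {A B : Type} (f : A -> B) (S : A -> Prop) : B -> Prop :=
  fun y => exists x, S x /\ y = f x.
Definition pair2 {A : Type} (a b : A) : A -> Prop := fun x => x = a \/ x = b.
Definition set_eq {A : Type} (S T : A -> Prop) : Prop := forall x, S x <-> T x.
Definition subset {A : Type} (S T : A -> Prop) : Prop := forall x, S x -> T x.

(* Signature: carrier, order of the complete join-semilattice, arbitrary joins
   (of subsets; a family (x_i) is joined via its image), product, involution,
   the operation ~, and the unit. *)
Record preIDA : Type := PreIDA {
  car :> Type;
  le : car -> car -> Prop;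
  join : (car -> Prop) -> car;
  mul : car -> car -> car;
  star : car -> car;
  neg : car -> car;
  one : car }.
Arguments le {p} _ _.
Arguments join {p} _.
Arguments mul {p} _ _.
Arguments star {p} _.
Arguments neg {p} _.
Arguments one {p}.

Definition join2 {K : preIDA} (a b : K) : K := join (pair2 a b).

Record is_IDA (K : preIDA) : Prop := {
  le_refl : forall x : K, le x x;
  le_antisym : forall x y : K, le x y -> le y x -> x = y;
  le_trans : forall x y z : K, le x y -> le y z -> le x z;
  join_ub : forall (S : K -> Prop) x, S x -> le x (join S);
  join_least : forall (S : K -> Prop) u, (forall x, S x -> le x u) -> le (join S) u;
  mul_assoc : forall x y z : K, mul x (mul y z) = mul (mul x y) z;
  mul_join_l : forall (x : K) S, mul x (join S) = join (image (mul x) S);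
  mul_join_r : forall (x : K) S, mul (join S) x = join (image (fun y => mul y x) S);
  mul_1l : forall x : K, mul one x = x;
  mul_1r : forall x : K, mul x one = x;
  star_invol : forall x : K, star (star x) = x;
  star_mul : forall x y : K, star (mul x y) = mul (star y) (star x);
  star_join : forall S : K -> Prop, star (join S) = join (image star S);
  neg_ax1 : forall x y : K, neg (mul x (neg (neg y))) = neg (mul x y);
  neg_ax2 : forall S : K -> Prop,
      neg (join (image (fun x => neg (neg x)) S)) = neg (join S);
  neg_ax3 : forall x : K, star (neg x) = neg x;
  neg_ax4 : forall x y : K,
      neg (neg (mul (neg (neg x)) y)) = neg (join2 (neg x) (neg (join2 (neg x) y)))
}.

Record IDA : Type := MkIDA { ida :> preIDA; ida_ax : is_IDA ida }.

Record IDA_morphism (K L : IDA) (f : K -> L) : Prop := {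
  morph_join : forall S : K -> Prop, f (join S) = join (image f S);
  morph_mul : forall x y : K, f (mul x y) = mul (f x) (f y);
  morph_star : forall x : K, f (star x) = star (f x);
  morph_one : f one = one;
  morph_neg : forall x : K, f (neg x) = neg (f x) }.

Definition is_test (K : IDA) (k : K) : Prop := exists l : K, k = neg l.
Definition vee {K : IDA} (W : K -> Prop) : K := neg (neg (join W)).
Definition bullet {K : IDA} (k v : K) : K := neg (neg (mul k v)).
Definition equivK (K : IDA) (k l : K) : Prop :=
  forall w : K, is_test K w -> bullet k w = bullet l w.

Record OLat : Type := MkOLat {
  ocar :> Type;
  ole : ocar -> ocar -> Prop;
  operp : ocar -> ocar;
  osup : (ocar -> Prop) -> ocar }.
Arguments ole {o} _ _.
Arguments operp {o} _.
Arguments osup {o} _.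

Definition otop {M : OLat} : M := osup (fun _ => True).
Definition obot {M : OLat} : M := osup (fun _ => False).
Definition ojoin {M : OLat} (a b : M) : M := osup (pair2 a b).
Definition omeet {M : OLat} (a b : M) : M := operp (ojoin (operp a) (operp b)).

Record is_COML (M : OLat) : Prop := {
  ole_refl : forall x : M, ole x x;
  ole_antisym : forall x y : M, ole x y -> ole y x -> x = y;
  ole_trans : forall x y z : M, ole x y -> ole y z -> ole x z;
  osup_ub : forall (S : M -> Prop) x, S x -> ole x (osup S);
  osup_least : forall (S : M -> Prop) u, (forall x, S x -> ole x u) -> ole (osup S) u;
  operp_anti : forall x y : M, ole x y -> ole (operp y) (operp x);
  operp_invol : forall x : M, operp (operp x) = x;
  operp_join : forall x : M, ojoin x (operp x) = otop;
  operp_meet : forall x : M, omeet x (operp x) = obot;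
  orthomodular : forall x y : M, ole x y -> y = ojoin x (omeet y (operp x)) }.

(* the test set (K~, ⪯, ⊥) with k ⪯ l iff ⋁{k,l} = l, w⊥ = ~w, ⋁W = ~~⊔W *)
Definition testOL (K : IDA) : OLat :=
  {| ocar := { k : K | is_test K k };
     ole := fun a b => vee (pair2 (proj1_sig a) (proj1_sig b)) = proj1_sig b;
     operp := fun a => exist (is_test K) (neg (proj1_sig a))
                             (ex_intro _ (proj1_sig a) eq_refl);
     osup := fun W => exist (is_test K)
                (vee (image (@proj1_sig _ (is_test K)) W))
                (ex_intro _ _ eq_refl) |}.

Definition semiFoulis (K : IDA) : Prop := is_COML (testOL K).

Definition bullet_map (K : IDA) (k : K) : testOL K -> testOL K :=
  fun w => exist (is_test K) (bullet k (proj1_sig w))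
                 (ex_intro _ (neg (mul k (proj1_sig w))) eq_refl).

Definition adjointable {M : OLat} (f : M -> M) : Prop :=
  exists g : M -> M, forall x y, ole (f x) (operp y) <-> ole x (operp (g y)).

Definition sasaki {M : OLat} (m x : M) : M := omeet m (ojoin (operp m) x).

(* [IsLin M L phi]: phi is a bijection from the IDA L onto the set of
   adjointable maps of M carrying the IDA operations of L to those of
   Lin(M): pointwise joins, composition, adjoint, identity, ~f = pi_{f(1)^perp}. *)
Record IsLin (M : OLat) (L : IDA) (phi : L -> (M -> M)) : Prop := {
  lin_inj : forall a b, phi a = phi b -> a = b;
  lin_onto : forall f : M -> M, adjointable f <-> exists a, phi a = f;
  lin_join : forall (S : L -> Prop) x,
      phi (join S) x = osup (fun y => exists a, S a /\ y = phi a x);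
  lin_mul : forall a b x, phi (mul a b) x = phi a (phi b x);
  lin_star : forall a x y, ole (phi a x) (operp y) <-> ole x (operp (phi (star a) y));
  lin_one : forall x, phi one x = x;
  lin_neg : forall a x, phi (neg a) x = sasaki (operp (phi a otop)) x }.

(* [IsPset M L phi Lset P psi]: psi is a bijection from the IDA P onto the
   subsets of Lset (an involutive submonoid of L = Lin(M) containing all pi_m),
   carrying the operations of P to those of P(Lset): union, setwise
   composition, setwise involution, unit {id}, ~A = {pi_{(\/_{a in A} a(1))^perp}}. *)
Record IsPset (M : OLat) (L : IDA) (phi : L -> (M -> M)) (Lset : L -> Prop)
    (P : IDA) (psi : P -> (L -> Prop)) : Prop := {
  ps_inj : forall p q, set_eq (psi p) (psi q) -> p = q;
  ps_sub : forall p, subset (psi p) Lset;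
  ps_onto : forall A : L -> Prop, subset A Lset -> exists p, set_eq (psi p) A;
  ps_join : forall (S : P -> Prop) a, psi (join S) a <-> exists p, S p /\ psi p a;
  ps_mul : forall p q a,
      psi (mul p q) a <-> exists x y, psi p x /\ psi q y /\ a = mul x y;
  ps_star : forall p a, psi (star p) a <-> exists x, psi p x /\ a = star x;
  ps_one : forall a, psi one a <-> a = one;
  ps_neg : forall p a, psi (neg p) a <->
      phi a = sasaki (operp (osup (fun y => exists x, psi p x /\ y = phi x otop))) }.

Definition IM_iso_on (K L : IDA) (A : K -> Prop) (B : L -> Prop) (g : K -> L) : Prop :=
  (forall k, A k -> B (g k)) /\
  (forall k l, A k -> A l -> g k = g l -> k = l) /\
  (forall m, B m -> exists k, A k /\ g k = m) /\
  (forall k l, A k -> A l -> g (mul k l) = mul (g k) (g l)) /\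
  (forall k, A k -> g (star k) = star (g k)) /\
  g one = one.

(* ---------- the functor T : IDA -> IM (object part: a subset of each K) ---------- *)
Definition T1 (T : forall K : IDA, K -> Prop) : Prop :=
  forall K : IDA,
    (forall k, is_test K k -> T K k) /\
    T K one /\
    (forall x y, T K x -> T K y -> T K (mul x y)) /\
    (forall x, T K x -> T K (star x)).

Definition T2 (T : forall K : IDA, K -> Prop) : Prop :=
  forall K : IDA, semiFoulis K ->
  (forall s t, T K s -> T K t -> (s = t <-> equivK K s t)) ->
  forall (L : IDA) (phi : L -> (testOL K -> testOL K)),
    IsLin (testOL K) L phi ->
    exists g : K -> L,
      (forall k, T K k -> phi (g k) = bullet_map K k) /\
      IM_iso_on K L (T K) (T L) g.

Definition T3 (T : forall K : IDA, K -> Prop) : Prop :=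
  forall (M : OLat), is_COML M ->
  forall (L : IDA) (phi : L -> (M -> M)), IsLin M L phi ->
  forall (P : IDA) (psi : P -> (L -> Prop)), IsPset M L phi (T L) P psi ->
    exists g : L -> P,
      (forall a, T L a -> set_eq (psi (g a)) (fun b => b = a)) /\
      IM_iso_on L P (T L) (T P) g.

(* T(f) is the restriction of f; in particular f maps T(K) into T(L). *)
Definition T4 (T : forall K : IDA, K -> Prop) : Prop :=
  forall (K L : IDA) (f : K -> L), IDA_morphism K L f ->
    forall k, T K k -> T L (f k).

Definition TFunctor (T : forall K : IDA, K -> Prop) : Prop :=
  T1 T /\ T2 T /\ T3 T /\ T4 T.

Definition TODA (T : forall K : IDA, K -> Prop) (K : IDA) : Prop :=
  semiFoulis K /\
  (forall A : K -> Prop,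
     subset (T K) A ->
     (forall x y, A x -> A y -> A (mul x y)) ->
     (forall x, A x -> A (star x)) ->
     (forall S : K -> Prop, subset S A -> A (join S)) ->
     forall k, A k) /\
  (forall S S' : K -> Prop, subset S (T K) -> subset S' (T K) ->
     (join S = join S' <-> set_eq S S')) /\
  (forall s t, T K s -> T K t -> (s = t <-> equivK K s t)).


(* The elements of K that are joins of subsets of T(K) contain T(K) and, by
   distributivity of the quantale, are closed under products, involution and
   arbitrary joins; by (TODA2) they are all of K.  Uniqueness is (TODA3). *)

Definition is_join_of {K : IDA} (P : K -> Prop) (x : K) : Prop :=
  exists S, subset S P /\ x = join S.

Section JoinsOfSubsets.

Variable K : IDA.
Let ax := ida_ax K.

Lemma join_singleton (t : K) : join (fun u => u = t) = t.
Proof.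
  apply (le_antisym _ ax).
  - apply (join_least _ ax). intros u ->. apply (le_refl _ ax).
  - apply (join_ub _ ax). reflexivity.
Qed.

Lemma mul_join_join (S S' : K -> Prop) :
  mul (join S) (join S') = join (fun t => exists a b, S a /\ S' b /\ t = mul a b).
Proof.
  apply (le_antisym _ ax).
  - rewrite (mul_join_l _ ax). apply (join_least _ ax). intros u [b [Hb ->]].
    rewrite (mul_join_r _ ax). apply (join_least _ ax). intros u [a [Ha ->]].
    apply (join_ub _ ax). exists a, b. auto.
  - apply (join_least _ ax). intros t [a [b [Ha [Hb ->]]]].
    apply (le_trans _ ax) with (mul (join S) b).
    + rewrite (mul_join_r _ ax). apply (join_ub _ ax). exists a. auto.
    + rewrite (mul_join_l _ ax (join S) S'). apply (join_ub _ ax). exists b. auto.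
Qed.

Variable P : K -> Prop.

Lemma is_join_of_mem (t : K) : P t -> is_join_of P t.
Proof.
  intro Pt. exists (fun u => u = t). split.
  - intros u ->. exact Pt.
  - symmetry. apply join_singleton.
Qed.

Lemma is_join_of_mul (x y : K) :
  (forall a b, P a -> P b -> P (mul a b)) ->
  is_join_of P x -> is_join_of P y -> is_join_of P (mul x y).
Proof.
  intros PM [S [HS ->]] [S' [HS' ->]].
  exists (fun t => exists a b, S a /\ S' b /\ t = mul a b). split.
  - intros t [a [b [Ha [Hb ->]]]]. auto.
  - apply mul_join_join.
Qed.

Lemma is_join_of_star (x : K) :
  (forall a, P a -> P (star a)) -> is_join_of P x -> is_join_of P (star x).
Proof.
  intros PS [S [HS ->]]. exists (image star S). split.
  - intros t [a [Ha ->]]. auto.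
  - apply (star_join _ ax).
Qed.

(* The join of joins is the join of the union of the representing subsets. *)
Lemma is_join_of_join (S : K -> Prop) :
  subset S (is_join_of P) -> is_join_of P (join S).
Proof.
  intro HS. exists (fun t => exists R, subset R P /\ S (join R) /\ R t). split.
  - intros t [R [HR [_ Rt]]]. auto.
  - apply (le_antisym _ ax).
    + apply (join_least _ ax). intros x Sx.
      destruct (HS x Sx) as [R [HR ->]].
      apply (join_least _ ax). intros t Rt. apply (join_ub _ ax). exists R. auto.
    + apply (join_least _ ax). intros t [R [_ [SR Rt]]].
      apply (le_trans _ ax) with (join R); apply (join_ub _ ax); assumption.
Qed.

End JoinsOfSubsets.

Lemma TODA_is_join_of (T : forall K : IDA, K -> Prop) (K : IDA) :
  T1 T -> TODA T K -> forall k : K, is_join_of (T K) k.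
Proof.
  intros hT1 [_ [generated _]].
  destruct (hT1 K) as [_ [_ [TM TS]]].
  apply generated.
  - intros t. apply is_join_of_mem.
  - intros x y. apply is_join_of_mul. exact TM.
  - intros x. apply is_join_of_star. exact TS.
  - apply is_join_of_join.
Qed.

Theorem lemma4p3 (T : forall K : IDA, K -> Prop) (hT : TFunctor T)
  (K : IDA) (hK : TODA T K) :
  forall k : K,
    exists S : K -> Prop,
      subset S (T K) /\ k = join S /\
      (forall S' : K -> Prop, subset S' (T K) -> k = join S' -> set_eq S' S).
Proof.
  intro k.
  destruct (TODA_is_join_of T K (proj1 hT) hK k) as [S [HS ->]].
  destruct hK as [_ [_ [join_inj _]]].
  exists S. split; [exact HS | split; [reflexivity |]].
  intros S' HS' E. apply (join_inj S' S HS' HS). symmetry. exact E.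
Qed.
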